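(* The structure $\mathcal{X}_{\mathrm{PNA}}=(X,\sqsubseteq,\oplus,X)$ is a down-closed BI frame.
   Context: Fix a set $\mathrm{Var}$ of variables; values are real numbers. For finite $S\subseteq\mathrm{Var}$, $\mathrm{Mem}[S]$ is the set of maps $S\to\mathbb{R}$, ordered pointwise; $p_A(m)$ is restriction. $\mathcal{D}(Y)$ denotes countably supported probability distributions on $Y$; for $\mu\in\mathcal{D}(\mathrm{Mem}[S])$, $\mathrm{dom}(\mu)=S$ and $\pi_A\mu$ is the marginal on $A\subseteq S$. $X=\bigcup_{S\text{ finite}}\mathcal{D}(\mathrm{Mem}[S])$, and $\mu\sqsubseteq\mu'$ iff $\mathrm{dom}(\mu)\subseteq\mathrm{dom}(\mu')$ and $\pi_{\mathrm{dom}(\mu)}\mu'=\mu$. A partition is a set of pairwise disjoint nonempty sets; $\mathcal{T}$ coarsens $\mathcal{S}$ if $\bigcup\mathcal{T}=\bigcup\mathcal{S}$ and each element of $\mathcal{T}$ is a union of a subfamily of $\mathcal{S}$. For a partition $\mathcal{S}$ with $\bigcup\mathcal{S}\subseteq\mathrm{dom}(\mu)$, $\mu$ is $\mathcal{S}$-PNA if for every $\mathcal{T}$ coarsening $\mathcal{S}$ and every family $(f_A:\mathrm{Mem}[A]\to[0,\infty))_{A\in\mathcal{T}}$ all non-decreasing or all non-increasing, $\mathbb{E}_{m\sim\mu}[\prod_Af_A(p_Am)]\le\prod_A\mathbb{E}_{m\sim\mu}[f_A(p_Am)]$. For $\mu_1\in\mathcal{D}(\mathrm{Mem}[S])$, $\mu_2\in\mathcal{D}(\mathrm{Mem}[T])$,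 $\mu_1\oplus\mu_2$ is empty if $S\cap T\neq\emptyset$ and otherwise is the set of $\mu\in\mathcal{D}(\mathrm{Mem}[S\cup T])$ with $\pi_S\mu=\mu_1$, $\pi_T\mu=\mu_2$ such that $\mu$ is $(\mathcal{S}\cup\mathcal{T})$-PNA for all partitions $\mathcal{S}$ of a subset of $S$ and $\mathcal{T}$ of a subset of $T$ with $\mu_1$ $\mathcal{S}$-PNA and $\mu_2$ $\mathcal{T}$-PNA. A (down-closed) BI frame is a tuple $(X,\sqsubseteq,\oplus,E)$, $\sqsubseteq$ a preorder, $\oplus:X\times X\to\mathcal{P}(X)$, $E\subseteq X$, satisfying: (Down-Closed) $z\in x\oplus y$, $x'\sqsubseteq x$, $y'\sqsubseteq y$ imply some $z'\sqsubseteq z$ with $z'\in x'\oplus y'$; (Commutativity) $z\in x\oplus y\Rightarrow z\in y\oplus x$; (Associativity) $w\in t\oplus z$ and $t\in x\oplus y$ imply some $s\in y\oplus z$ with $w\in x\oplus s$; (Unit Existence) for each $x$ some $e\in E$ has $x\in e\oplus x$; (Unit Coherence) $e\in E$, $x\in y\oplus e\Rightarrow y\sqsubseteq x$; (Unit Closure) $e\in E$, $e\sqsubseteq e'\Rightarrow e'\in E$. *)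

From HB Require Import structures.
From mathcomp Require Import all_boot all_order all_algebra.
From mathcomp Require Import all_classical all_reals.
From mathcomp Require Import ereal esum.
Set Implicit Arguments.
Unset Strict Implicit.
Unset Printing Implicit Defensive.
Import Order.TTheory GRing.Theory Num.Theory.
Local Open Scope classical_set_scope.
Local Open Scope ring_scope.

Section PNA.
Context {R : realType} {Var : Type}.

(* A memory "on S" (an element of Mem[S]) is
   encoded as a map that vanishes outside S (canonical bijection with S -> R,
   preserving the pointwise order and restriction). *)
Definition mem : Type := {classic (Var -> R)}.
Definition memOn (S : set Var) (m : mem) : Prop := forall x, ~ S x -> m x = 0.
Definition restr (A : set Var) (m : mem) : mem :=
  fun x => if `[< A x >] then m x else 0.
Definition mem_le (m1 m2 : mem) : Prop := forall x, m1 x <= m2 x.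

Record distr := Distr {
  dom : set Var;
  dom_fin : finite_set dom;
  mass : mem -> R;
  mass_ge0 : forall m, 0 <= mass m;
  mass_on : forall m, mass m != 0 -> memOn dom m;
  mass_cnt : countable [set m | mass m != 0];
  mass_sum : (\esum_(m in [set: mem]) (mass m)%:E = 1)%E }.

Definition marg (A : set Var) (mu : distr) (m' : mem) : R :=
  fine (\esum_(m in [set m : mem | restr A m = m']) (mass mu m)%:E).

Definition dle (mu mu' : distr) : Prop :=
  dom mu `<=` dom mu' /\ forall m', mass mu m' = marg (dom mu) mu' m'.

(* expectation of f (used for nonnegative f) *)
Definition Ex (mu : distr) (f : mem -> R) : \bar R :=
  (\esum_(m in [set: mem]) (mass mu m * f m)%:E)%E.

Definition setset : Type := {classic (set Var)}.

Definition is_partition (P : set setset) : Prop :=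
  (forall A, P A -> A !=set0) /\
  (forall A B, P A -> P B -> A <> B -> A `&` B = set0).

Definition bigU (P : set setset) : set Var := \bigcup_(A in P) (A : set Var).

Definition coarsens (T S : set setset) : Prop :=
  is_partition T /\ bigU T = bigU S /\
  forall A, T A -> exists F : set setset, F `<=` S /\ A = bigU F.

Definition nondecr_on (A : set Var) (f : mem -> R) : Prop :=
  forall m1 m2, memOn A m1 -> memOn A m2 -> mem_le m1 m2 -> f m1 <= f m2.
Definition nonincr_on (A : set Var) (f : mem -> R) : Prop :=
  forall m1 m2, memOn A m1 -> memOn A m2 -> mem_le m1 m2 -> f m2 <= f m1.

Definition PNA (mu : distr) (S : set setset) : Prop :=
  is_partition S /\ bigU S `<=` dom mu /\
  forall (T : set setset) (f : setset -> mem -> R),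
    coarsens T S ->
    (forall A, T A -> forall m, memOn A m -> 0 <= f A m) ->
    ((forall A, T A -> nondecr_on A (f A)) \/
     (forall A, T A -> nonincr_on A (f A))) ->
    (Ex mu (fun m => (\big[*%R/1%R]_(A \in T) f A (restr A m))%R)
      <= \big[*%E/1%E]_(A \in T) Ex mu (fun m => f A (restr A m)))%E.

Definition oplus (mu1 mu2 : distr) : set distr :=
  [set mu | (dom mu1 `&` dom mu2 = set0) /\
     dom mu = dom mu1 `|` dom mu2 /\
     (forall m', marg (dom mu1) mu m' = mass mu1 m') /\
     (forall m', marg (dom mu2) mu m' = mass mu2 m') /\
     (forall S T : set setset,
        is_partition S -> bigU S `<=` dom mu1 ->
        is_partition T -> bigU T `<=` dom mu2 ->
        PNA mu1 S -> PNA mu2 T -> PNA mu (S `|` T))].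

End PNA.

Definition DownClosedBIFrame (X : Type) (le : X -> X -> Prop)
    (op : X -> X -> set X) (E : set X) : Prop :=
  ((forall x, le x x) /\ (forall x y z, le x y -> le y z -> le x z)) /\
      (forall x y z x' y', op x y z -> le x' x -> le y' y ->
         exists2 z', le z' z & op x' y' z') /\
      (forall x y z, op x y z -> op y x z) /\
      (forall x y z t w, op t z w -> op x y t ->
         exists2 s, op y z s & op x s w) /\
      (forall x, exists2 e, E e & op e x x) /\
      (forall e x y, E e -> op y e x -> le y x) /\
      (forall e e', E e -> le e e' -> E e').

From Pilot Require Import Defs.
From HB Require Import structures.
From mathcomp Require Import all_boot all_order all_algebra.
From mathcomp Require Import all_classical all_reals.
From mathcomp Require Import ereal esum.
Set Implicit Arguments.
Unset Strict Implicit.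
Unset Printing Implicit Defensive.
Import Order.TTheory GRing.Theory Num.Theory.
Local Open Scope classical_set_scope.
Local Open Scope ring_scope.

(* Expectations of functions that only read the variables in B are determined
   by the B-marginal.  Hence both the order and the PNA property for partitions
   inside B only depend on B-marginals.  Besides this bookkeeping, two closure
   properties of PNA are needed: it passes to coarsenings, and to the traces
   {A \cap Y} of the blocks on a set Y of variables, since a coarsening of the
   traces lifts to a coarsening of the original blocks.  Down-closure is then
   witnessed by the marginal of z on dom x' \cup dom y', associativity by the
   marginal of w on dom y \cup dom z, and the unit is the point mass on the
   empty memory. *)

Section PNA_frame.
Context {R : realType} {Var : Type}.
Local Notation mem := (@Defs.mem R Var).
Local Notation distr := (@distr R Var).
Local Notation bigU := (@Defs.bigU Var).
Local Notation setset := (@Defs.setset Var).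
Implicit Types (A B Y : set Var) (m : mem) (mu nu rho : distr).

Lemma memOn_restr A m : memOn A (restr A m).
Proof. by move=> x Ax; rewrite /restr; case: asboolP. Qed.

Lemma restr_id A m : memOn A m -> restr A m = m.
Proof.
by move=> mA; apply/funext => x; rewrite /restr; case: asboolP => // /mA ->.
Qed.

Lemma restr_restr A B m : A `<=` B -> restr A (restr B m) = restr A m.
Proof.
move=> AB; apply/funext => x; rewrite /restr; case: asboolP => // Ax.
by case: asboolP => // /(_ (AB _ Ax)).
Qed.

Lemma restr_mem_le A m1 m2 : mem_le m1 m2 -> mem_le (restr A m1) (restr A m2).
Proof. by move=> le x; rewrite /restr; case: asboolP. Qed.

Definition mem0 : mem := fun=> 0.

Lemma restr_set0 m : restr set0 m = mem0.
Proof. by apply/funext => x; rewrite /restr; case: asboolP. Qed.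

Local Open Scope ereal_scope.

Lemma esumZl (T : choiceType) (D : set T) (c : R) (a : T -> \bar R) :
  (0 <= c)%R -> (forall i, 0 <= a i) ->
  \esum_(i in D) (c%:E * a i) = c%:E * \esum_(i in D) a i.
Proof.
move=> c0 a0; rewrite /esum -ereal_supZl//; last first.
  by apply/set0P; exists (\sum_(i \in set0) a i); exists set0 => //; exact: fsets_set0.
congr ereal_sup; apply/seteqP; split => x /=.
- case=> F [finF FD] <-; exists (\sum_(i \in F) a i); first by exists F.
  by rewrite !fsbig_finite // ge0_sume_distrr.
- case=> y [F [finF FD] <-] <-; exists F => //.
  by rewrite !fsbig_finite // ge0_sume_distrr.
Qed.

Lemma esum_fiber (T U : choiceType) (p : T -> U) (a : T -> \bar R) :
  (forall t, 0 <= a t) ->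
  \esum_(u in [set: U]) \esum_(t in [set t | p t = u]) a t =
  \esum_(t in [set: T]) a t.
Proof.
move=> a0; rewrite (esum_esum (fun _ t _ _ => a0 t)).
rewrite (@reindex_esum R T (U * T)%type setT _ (fun t => (p t, t))) //.
split=> [t _ //|t1 t2 _ _ [] //|[u t] [/= _ <-]]; by exists t.
Qed.

Lemma esum_setT1 (T : choiceType) (a : T -> \bar R) (t0 : T) :
  (forall t, t <> t0 -> a t = 0) -> 0 <= a t0 ->
  \esum_(t in [set: T]) a t = a t0.
Proof.
move=> a0 at0; rewrite -(esum_set1 at0) [RHS]esum_mkcond; apply: eq_esum => t _.
by case: (boolP (t \in [set t0])) => // /negP tt0; rewrite a0 // => e; apply/tt0/mem_set.
Qed.

Lemma esum_mass_fin mu (D : set mem) : \esum_(m in D) (mass mu m)%:E \is a fin_num.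
Proof.
rewrite ge0_fin_numE; last by apply: esum_ge0 => m _; rewrite lee_fin mass_ge0.
rewrite (@le_lt_trans _ _ 1) ?ltry // -(mass_sum mu) esum_mkcond.
by apply: le_esum => m _; case: ifP => // _; rewrite lee_fin mass_ge0.
Qed.

Definition local B (g : mem -> R) := forall m, g (restr B m) = g m.

Lemma Ex_local_marg rho B (g : mem -> R) : (forall m, 0 <= g m)%R -> local B g ->
  Ex rho g = \esum_(m' in [set: mem]) (marg B rho m' * g m')%:E.
Proof.
move=> g0 gB; rewrite /Ex -(@esum_fiber mem mem (restr B)); last first.
  by move=> m; rewrite lee_fin mulr_ge0 // mass_ge0.
apply: eq_esum => m' _.
rewrite /marg EFinM fineK ?esum_mass_fin // muleC -esumZl //; last first.
  by move=> m; rewrite lee_fin mass_ge0.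
by apply: eq_esum => m /= <-; rewrite gB -EFinM mulrC.
Qed.

Definition fiber_ind A m' m : R := if `[< restr A m = m' >] then 1%R else 0%R.

Lemma marg_Ex A nu m' : marg A nu m' = fine (Ex nu (fiber_ind A m')).
Proof.
rewrite /marg /Ex esum_mkcond; congr fine; apply: eq_esum => m _.
rewrite /fiber_ind; case: (boolP (m \in _)) => [/set_mem /= ->|/negP h].
  by case: asboolP => // _; rewrite mulr1.
by case: asboolP => [/mem_set //|_]; rewrite mulr0.
Qed.

Lemma marg_dom mu m' : marg (dom mu) mu m' = mass mu m'.
Proof.
have restr_mass m : mass mu m != 0%R -> restr (dom mu) m = m.
  by move=> /mass_on; apply: restr_id.
rewrite marg_Ex /Ex (@esum_setT1 _ _ m'); last 2 first.
- move=> m mm'; rewrite /fiber_ind; case: asboolP => [h|_]; last by rewrite mulr0.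
  have [->|/restr_mass e] := eqVneq (mass mu m) 0%R; first by rewrite mul0r.
  by rewrite e in h; case: mm'.
- by rewrite lee_fin mulr_ge0 ?mass_ge0 // /fiber_ind; case: ifP.
rewrite /= /fiber_ind; case: asboolP => [_|h]; first by rewrite mulr1.
by have [->|/restr_mass //] := eqVneq (mass mu m') 0%R; rewrite mul0r.
Qed.

Definition agree_on B mu nu := forall g : mem -> R,
  (forall m, 0 <= g m)%R -> local B g -> Ex mu g = Ex nu g.

Lemma agree_onE B mu nu :
  agree_on B mu nu <-> forall m', marg B mu m' = marg B nu m'.
Proof.
split=> [ag m'|eqm g g0 gB].
  rewrite !marg_Ex ag // => [m|m]; first by rewrite /fiber_ind; case: ifP.
  by rewrite /fiber_ind restr_restr.
by rewrite !(Ex_local_marg _ g0 gB); apply: eq_esum => m _; rewrite eqm.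
Qed.

Lemma agree_onC B mu nu : agree_on B mu nu -> agree_on B nu mu.
Proof. by move=> ag g g0 gB; rewrite ag. Qed.

Lemma agree_onS A B mu nu : A `<=` B -> agree_on B mu nu -> agree_on A mu nu.
Proof.
move=> AB ag g g0 gA; apply: ag => // m.
by rewrite -[in RHS]gA -(restr_restr m AB) gA.
Qed.

Lemma dle_agree_on mu nu : dle mu nu -> agree_on (dom mu) mu nu.
Proof. by move=> [_ e]; apply/agree_onE => m'; rewrite marg_dom e. Qed.

Lemma dle_refl mu : dle mu mu.
Proof. by split=> // m; rewrite marg_dom. Qed.

Lemma dle_trans mu nu rho : dle mu nu -> dle nu rho -> dle mu rho.
Proof.
move=> [mn e] nr; split; first exact: subset_trans mn nr.1.
by move=> m; rewrite e; move/agree_onE: (agree_onS mn (dle_agree_on nr)) => ->.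
Qed.

Lemma dle_sub_dom mu nu rho : dle mu rho -> dle nu rho -> dom mu `<=` dom nu ->
  dle mu nu.
Proof.
move=> [_ e] nr mn; split=> // m; rewrite e.
by move/agree_onE: (agree_onS mn (agree_onC (dle_agree_on nr))) => ->.
Qed.

Lemma marg_ge0 A nu m : (0 <= marg A nu m)%R.
Proof. by apply: fine_ge0; apply: esum_ge0 => m0 _; rewrite lee_fin mass_ge0. Qed.

Lemma marg_memOn A nu m : marg A nu m != 0%R -> memOn A m.
Proof.
apply: contraNP => nm; apply/eqP; rewrite /marg esum1 // => m0 /= e.
by exfalso; apply: nm; rewrite -e; exact: memOn_restr.
Qed.

Lemma marg_cnt A nu : countable [set m | marg A nu m != 0%R].
Proof.
apply: (@sub_countable _ _ _ (restr A @` [set m | mass nu m != 0%R])).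
  apply: subset_card_le => m' /= /negP; apply: contra_notP => nex; apply/eqP.
  rewrite /marg esum1 // => m0 /= e.
  by apply: contra_notP nex => /eqP nz; exists m0.
exact: card_le_trans (card_image_le _ _) (mass_cnt nu).
Qed.

Lemma marg_sum A nu : \esum_(m in [set: mem]) (marg A nu m)%:E = 1.
Proof.
transitivity (\esum_(m in [set: mem]) (marg A nu m * 1)%:E).
  by apply: eq_esum => m _; rewrite mulr1.
rewrite -(@Ex_local_marg nu A (fun=> 1%R)) // -(mass_sum nu).
by apply: eq_esum => m _; rewrite mulr1.
Qed.

Definition marg_distr A (Afin : finite_set A) nu : distr :=
  Distr Afin (@marg_ge0 A nu) (@marg_memOn A nu) (marg_cnt A nu) (marg_sum A nu).

Lemma marg_distr_dle A (Afin : finite_set A) nu : A `<=` dom nu ->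
  dle (marg_distr Afin nu) nu.
Proof. by []. Qed.

Definition dirac_mass m : R := if `[< m = mem0 >] then 1%R else 0%R.

Lemma dirac_ge0 m : (0 <= dirac_mass m)%R.
Proof. by rewrite /dirac_mass; case: ifP. Qed.

Lemma dirac_memOn m : dirac_mass m != 0%R -> memOn set0 m.
Proof. by rewrite /dirac_mass; case: asboolP => [-> _ //|_]; rewrite eqxx. Qed.

Lemma dirac_cnt : countable [set m | dirac_mass m != 0%R].
Proof.
apply: (@sub_countable _ _ _ [set mem0]); last exact: countable1.
by apply: subset_card_le => m /=; rewrite /dirac_mass; case: asboolP; rewrite ?eqxx.
Qed.

Lemma dirac_sum : \esum_(m in [set: mem]) (dirac_mass m)%:E = 1.
Proof.
rewrite (@esum_setT1 _ _ mem0); first by rewrite /dirac_mass; case: asboolP.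
- by move=> m m0; rewrite /dirac_mass; case: asboolP.
- by rewrite lee_fin dirac_ge0.
Qed.

Definition dirac0 : distr :=
  Distr (finite_set0 _) dirac_ge0 dirac_memOn dirac_cnt dirac_sum.

Lemma dirac0_dle nu : dle dirac0 nu.
Proof.
split=> //= m'; rewrite /marg /dirac_mass; case: asboolP => [->|ne].
  rewrite (_ : [set m | restr set0 m = mem0] = setT) ?mass_sum //.
  by apply/seteqP; split=> // m _ /=; rewrite restr_set0.
by rewrite esum1 // => m /= e; rewrite -e restr_set0 in ne.
Qed.

Implicit Types (P Q S T U : set setset).

Lemma partition_eq P (A B : setset) x : is_partition P -> P A -> P B ->
  (A : set Var) x -> (B : set Var) x -> A = B.
Proof.
move=> [_ Pd] PA PB Ax Bx; apply: contrapT => AB.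
by have := Pd _ _ PA PB AB; apply/eqP/set0P; exists x.
Qed.

Lemma bigU_set0 : bigU set0 = set0.
Proof. exact: bigcup_set0. Qed.

Lemma bigU_setU P Q : bigU (P `|` Q) = bigU P `|` bigU Q.
Proof. exact: bigcup_setU. Qed.

Lemma partition_bigU0 P : is_partition P -> bigU P = set0 -> P = set0.
Proof.
move=> [Pn _] P0; apply/seteqP; split=> // A PA; have [x Ax] := Pn A PA.
have : bigU P x by exists A.
by rewrite P0.
Qed.

Lemma partitionU P Q : is_partition P -> is_partition Q ->
  bigU P `&` bigU Q = set0 -> is_partition (P `|` Q).
Proof.
move=> [Pn Pd] [Qn Qd] /disjoints_subset PQ; split=> [A [/Pn|/Qn] //|A B].
case=> [PA|QA] [PB|QB] AB; [exact: Pd| | |exact: Qd]; apply/disjoints_subset.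
- by move=> x Ax Bx; apply: (PQ x); [exists A|exists B].
- by move=> x Ax Bx; apply: (PQ x); [exists B|exists A].
Qed.

Lemma coarsens_sub T S : is_partition T -> bigU T = bigU S ->
  (forall (A : setset) x, T A -> (A : set Var) x ->
     exists2 C : setset, S C & (C : set Var) `<=` A /\ (C : set Var) x) ->
  coarsens T S.
Proof.
move=> Tp TS cover; split=> //; split=> // A TA.
exists [set C | S C /\ (C : set Var) `<=` A]; split=> [C []//|].
apply/(@seteqP Var); split=> [x Ax|x [C [_ CA] Cx]]; last exact: CA.
by have [C SC [CA Cx]] := cover A x TA Ax; exists C.
Qed.

Lemma coarsens_cover T S (A : setset) x : coarsens T S -> T A -> (A : set Var) x ->
  exists2 C : setset, S C & (C : set Var) `<=` A /\ (C : set Var) x.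
Proof.
move=> [_ [_ blk]] TA Ax; have [F [FS eA]] := blk A TA.
move: Ax; rewrite eA => -[C FC Cx]; exists C; first exact: FS.
by split=> // y Cy; exists C.
Qed.

Lemma coarsens_block_sub T S (A B : setset) x : is_partition S -> coarsens T S ->
  T A -> S B -> (A : set Var) x -> (B : set Var) x -> (B : set Var) `<=` A.
Proof.
move=> Sp cTS TA SB Ax Bx; have [C SC [CA Cx]] := coarsens_cover cTS TA Ax.
by rewrite (partition_eq Sp SC SB Cx Bx) in CA.
Qed.

Lemma coarsens_refl S : is_partition S -> coarsens S S.
Proof. by move=> Sp; apply: coarsens_sub => // A x SA Ax; exists A => //; split. Qed.

Lemma coarsens_trans U T S : coarsens U T -> coarsens T S -> coarsens U S.
Proof.
move=> cUT cTS; have [Up [UT _]] := cUT; have [_ [TS _]] := cTS.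
apply: coarsens_sub => [//|//|A x UA Ax]; first by rewrite UT.
have [B TB [BA Bx]] := coarsens_cover cUT UA Ax.
have [C SC [CB Cx]] := coarsens_cover cTS TB Bx.
by exists C => //; split=> //; apply: subset_trans BA.
Qed.

Lemma coarsensU T1 T2 S1 S2 : coarsens T1 S1 -> coarsens T2 S2 ->
  bigU T1 `&` bigU T2 = set0 -> coarsens (T1 `|` T2) (S1 `|` S2).
Proof.
move=> c1 c2 T12; have [T1p [e1 _]] := c1; have [T2p [e2 _]] := c2.
apply: coarsens_sub; first exact: partitionU.
  by rewrite !bigU_setU e1 e2.
move=> A x [T1A|T2A] Ax.
  by have [C SC CA] := coarsens_cover c1 T1A Ax; exists C => //; left.
by have [C SC CA] := coarsens_cover c2 T2A Ax; exists C => //; right.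
Qed.

Definition restr_part P Y : set setset :=
  [set B : setset | (B : set Var) !=set0 /\
     exists2 A : setset, P A & (B : set Var) = (A : set Var) `&` Y].

Lemma bigU_restr_part P Y : bigU (restr_part P Y) = bigU P `&` Y.
Proof.
apply/seteqP; split=> [x [B [_ [A PA ->]] [Ax Yx]]|x [[A PA Ax] Yx]].
  by split=> //; exists A.
by exists ((A : set Var) `&` Y) => //; split; [exists x | exists A].
Qed.

Lemma partition_restr_part P Y : is_partition P -> is_partition (restr_part P Y).
Proof.
move=> Pp; split=> [B []//|B1 B2 [_ [A1 PA1 ->]] [_ [A2 PA2 ->]] ne].
apply/disjoints_subset => x [A1x _] [A2x _].
by apply: ne; rewrite (partition_eq Pp PA1 PA2 A1x A2x).
Qed.

Lemma coarsens_restr_part_split T Y1 Y2 : is_partition T ->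
  bigU T `<=` Y1 `|` Y2 -> coarsens T (restr_part T Y1 `|` restr_part T Y2).
Proof.
move=> Tp TY; apply: coarsens_sub => //.
  by rewrite bigU_setU !bigU_restr_part -setIUr setIidl.
move=> A x TA Ax; have TAx : bigU T x by exists A.
have [Y1x|Y2x] := TY x TAx.
  exists ((A : set Var) `&` Y1); last by split=> //; exact: subIsetl.
  by left; split; [exists x | exists A].
exists ((A : set Var) `&` Y2); last by split=> //; exact: subIsetl.
by right; split; [exists x | exists A].
Qed.

Lemma fsprodr_ge0 (I : choiceType) (D : set I) (F : I -> R) :
  (forall i, D i -> 0 <= F i)%R -> (0 <= \big[*%R/1%R]_(i \in D) F i)%R.
Proof.
move=> F0; case: finite_supportP; rewrite ?big_nil// => X XD _ _.
by rewrite big_seq_cond; apply: prodr_ge0 => i /andP[/XD/F0].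
Qed.

Lemma Ex_cst1 mu : Ex mu (fun=> 1%R) = 1.
Proof. by rewrite -(mass_sum mu); apply: eq_esum => m _; rewrite mulr1. Qed.

Lemma PNA_ineq_set0 mu (f : setset -> mem -> R) :
  Ex mu (fun m => \big[*%R/1%R]_(A \in set0) f A (restr A m))
    <= \big[*%E/1%E]_(A \in set0) Ex mu (fun m => f A (restr A m)).
Proof.
by rewrite fsbig_set0 -(Ex_cst1 mu); apply: le_esum => m _; rewrite fsbig_set0.
Qed.

Lemma PNA_set0 mu : PNA mu set0.
Proof.
split; first by split=> // A B [].
split; first by rewrite bigU_set0.
move=> T f [Tp [T0 _]] _ _.
by rewrite (partition_bigU0 Tp); [exact: PNA_ineq_set0 | rewrite T0 bigU_set0].
Qed.

(* Both sides of the PNA inequality are expectations of functions local to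
   [bigU S], so they only see the marginal on [B]. *)
Lemma PNA_agree_on B mu nu S : agree_on B mu nu -> bigU S `<=` B ->
  bigU S `<=` dom nu -> PNA mu S -> PNA nu S.
Proof.
move=> ag SB Snu [Sp [_ HS]]; split=> //; split=> // T f cTS f0 fm.
have TB (A : setset) : T A -> (A : set Var) `<=` B.
  by move=> TA x Ax; apply: SB; case: cTS => _ [<- _]; exists A.
have fA0 (A : setset) m : T A -> (0 <= f A (restr A m))%R.
  by move=> TA; apply: f0 => //; exact: memOn_restr.
rewrite -ag; last 2 first.
- by move=> m; apply: fsprodr_ge0 => A; exact: fA0.
- by move=> m; apply: eq_fsbigr => A /set_mem TA; rewrite restr_restr //; exact: TB.
rewrite (eq_fsbigr (fun A => Ex mu (fun m => f A (restr A m)))); first exact: HS.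
move=> A /set_mem TA; rewrite ag // => [m|m]; first exact: fA0.
by rewrite restr_restr //; exact: TB.
Qed.

Lemma PNA_dle mu nu S : dle mu nu -> PNA mu S -> PNA nu S.
Proof.
move=> mn hS; have [_ [Smu _]] := hS.
exact: PNA_agree_on (dle_agree_on mn) Smu (subset_trans Smu mn.1) hS.
Qed.

Lemma PNA_dle_down mu nu S : dle mu nu -> bigU S `<=` dom mu -> PNA nu S -> PNA mu S.
Proof. by move=> mn Smu; apply: (PNA_agree_on (agree_onC (dle_agree_on mn)) Smu Smu). Qed.

Lemma PNA_coarsens mu P Q : coarsens Q P -> PNA mu P -> PNA mu Q.
Proof.
move=> cQP [_ [Pmu HP]]; have [Qp [QP _]] := cQP.
split=> //; split=> [|T f cTQ]; first by rewrite QP.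
by apply: HP; exact: coarsens_trans cTQ cQP.
Qed.

(* The negative association inequality for a family [U] of blocks follows from
   that for a coarsening [e @` U] of [P] into larger blocks [e D \supset D]:
   a function of the variables of [D] is also one of the variables of [e D]. *)
Lemma PNA_lift mu P U (e inv : setset -> setset) (f : setset -> mem -> R) :
  PNA mu P -> coarsens (e @` U) P ->
  (forall D, U D -> (D : set Var) `<=` e D) -> (forall D, U D -> inv (e D) = D) ->
  (forall D, U D -> forall m, memOn D m -> 0 <= f D m)%R ->
  (forall D, U D -> nondecr_on D (f D)) \/ (forall D, U D -> nonincr_on D (f D)) ->
  Ex mu (fun m => \big[*%R/1%R]_(D \in U) f D (restr D m))
    <= \big[*%E/1%E]_(D \in U) Ex mu (fun m => f D (restr D m)).
Proof.
move=> [_ [_ HP]] cUP sub invK f0 fm.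
have e_inj : set_inj U e.
  by move=> D1 D2 /set_mem U1 /set_mem U2 e12; rewrite -(invK _ U1) e12 invK.
pose g E m := f (inv E) (restr (inv E) m).
have gE D m : U D -> g (e D) (restr (e D) m) = f D (restr D m).
  by move=> UD; rewrite /g invK // restr_restr //; exact: sub.
have g0 : forall E, (e @` U) E -> forall m, memOn E m -> (0 <= g E m)%R.
  by move=> _ [D UD <-] m _; rewrite /g invK //; apply: f0 => //; exact: memOn_restr.
have gm : (forall E, (e @` U) E -> nondecr_on E (g E)) \/
          (forall E, (e @` U) E -> nonincr_on E (g E)).
  by case: fm => fm; [left|right] => _ [D UD <-] m1 m2 _ _ le; rewrite /g invK //;
    apply: (fm D UD _ _ (memOn_restr _) (memOn_restr _)); exact: restr_mem_le.
have lhsE : (fun m => \big[*%R/1%R]_(E \in e @` U) g E (restr E m)) =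
            (fun m => \big[*%R/1%R]_(D \in U) f D (restr D m)).
  by apply/funext => m; rewrite fsbig_image //; apply: eq_fsbigr => D /set_mem; exact: gE.
have rhsE : \big[*%E/1%E]_(E \in e @` U) Ex mu (fun m => g E (restr E m)) =
            \big[*%E/1%E]_(D \in U) Ex mu (fun m => f D (restr D m)).
  rewrite fsbig_image //; apply: eq_fsbigr => D /set_mem UD.
  by congr Ex; apply/funext => m; exact: gE.
by rewrite -lhsE -rhsE; exact: HP.
Qed.

Section lift_restr_part.
Variables (P : set setset) (Y : set Var) (U : set setset) (D0 : setset).
Hypotheses (Pp : is_partition P) (cU : coarsens U (restr_part P Y)) (UD0 : U D0).

(* Each block of [P] goes to the block of [U] containing its trace on [Y];
   the blocks that miss [Y] all go to [D0]. *)
Definition lift (D : setset) : setset := bigU [set A : setset | P A /\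
  ((((A : set Var) `&` Y) !=set0 /\ (A : set Var) `&` Y `<=` D) \/
   ((A : set Var) `&` Y = set0 /\ D = D0))].

Let Qp : is_partition (restr_part P Y) := partition_restr_part Y Pp.

Lemma trace_sub_block D (A : setset) y : U D -> P A -> (D : set Var) y ->
  (A : set Var) y -> Y y -> (A : set Var) `&` Y `<=` D.
Proof.
move=> UD PA Dy Ay Yy.
apply: (coarsens_block_sub (B := (A : set Var) `&` Y : setset)) Qp cU UD _ Dy _ => //.
by split; [exists y | exists A].
Qed.

Lemma sub_lift D : U D -> (D : set Var) `<=` lift D.
Proof.
move=> UD x Dx; have [_ [UQ _]] := cU.
have : bigU U x by exists D.
rewrite UQ bigU_restr_part => -[[A PA Ax] Yx].
by exists A => //; split=> //; left; split; [exists x | exact: trace_sub_block Dx Ax Yx].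
Qed.

Lemma lift_trace D : U D -> (lift D : set Var) `&` Y = D.
Proof.
move=> UD; apply/seteqP; split=> [x [[A [PA [[_ AD]|[A0 _]]] Ax] Yx]|x Dx].
- exact: AD.
- by have : ((A : set Var) `&` Y) x by []; rewrite A0.
have [_ [UQ _]] := cU; split; first exact: sub_lift.
have : bigU U x by exists D.
by rewrite UQ bigU_restr_part => -[].
Qed.

Lemma coarsens_lift : coarsens (lift @` U) P.
Proof.
have [[Un Ud] [UQ _]] := cU.
split; [split|split].
- move=> _ [D UD <-]; have [x Dx] := Un D UD; exists x; exact: sub_lift.
- move=> _ _ [D1 U1 <-] [D2 U2 <-] ne; apply/disjoints_subset => x.
  move=> [A1 [PA1 c1] A1x] [A2 [PA2 c2] A2x].
  have eA := partition_eq Pp PA1 PA2 A1x A2x; subst A2.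
  have D12 : D1 <> D2 by move=> e12; apply: ne; subst.
  case: c1 c2 => [[[y Ay] AD1]|[A0 e1]] [[[y' Ay'] AD2]|[A0' e2]].
  + have := Ud _ _ U1 U2 D12; apply/eqP/set0P; exists y.
    by split; [exact: AD1 | exact: AD2].
  + by rewrite A0' in Ay.
  + by rewrite A0 in Ay'.
  + by apply: D12; subst.
- apply/seteqP; split=> [x [_ [D UD <-] [A [PA _] Ax]]|x [A PA Ax]].
    by exists A.
  have [[y [Ay Yy]]|A0] := pselect (((A : set Var) `&` Y) !=set0).
    have : bigU U y by rewrite UQ bigU_restr_part; split=> //; exists A.
    case=> D UD Dy; exists (lift D); first by exists D.
    exists A => //; split=> //; left.
    by split; [exists y | exact: trace_sub_block Dy Ay Yy].
  exists (lift D0); first by exists D0.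
  exists A => //; split=> //; right; split=> //.
  by apply/seteqP; split=> // y Ay; apply: A0; exists y.
- by move=> _ [D UD <-]; eexists; split; last reflexivity; move=> A [].
Qed.

End lift_restr_part.

Lemma PNA_restr_part mu P Y : PNA mu P -> PNA mu (restr_part P Y).
Proof.
move=> hP; have [Pp [Pmu _]] := hP.
split; first exact: partition_restr_part.
split; first by rewrite bigU_restr_part => x [/Pmu].
move=> U f cU f0 fm.
have [[D0 UD0]|U0] := pselect (U !=set0); last first.
  have -> : U = set0 by apply/seteqP; split=> // D UD; apply: U0; exists D.
  exact: PNA_ineq_set0.
apply: (PNA_lift (inv := fun E => (E : set Var) `&` Y) hP (coarsens_lift Pp cU UD0)) => //.
- by move=> D; exact: sub_lift.
- by move=> D UD; rewrite (lift_trace D0 Pp cU UD).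
Qed.

Lemma oplus_dlel mu nu rho : oplus mu nu rho -> dle mu rho.
Proof.
by move=> [_ [e [mm _]]]; split=> [|m]; [rewrite e; exact: subsetUl | rewrite mm].
Qed.

Lemma oplusC mu nu rho : oplus mu nu rho -> oplus nu mu rho.
Proof.
move=> [d [e [mm [mn H]]]]; split; first by rewrite setIC.
split; first by rewrite setUC.
by do 2 split=> //; move=> S T Sp Smu Tp Tnu hS hT; rewrite setUC; exact: H.
Qed.

Lemma oplus_dler mu nu rho : oplus mu nu rho -> dle nu rho.
Proof. by move/oplusC; exact: oplus_dlel. Qed.

Lemma PNA_oplus mu nu rho S T : oplus mu nu rho -> PNA mu S -> PNA nu T ->
  PNA rho (S `|` T).
Proof.
move=> [_ [_ [_ [_ H]]]] hS hT; have [Sp [Smu _]] := hS; have [Tp [Tnu _]] := hT.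
exact: H.
Qed.

Lemma oplus_intro mu nu rho : dom mu `&` dom nu = set0 ->
  dom rho = dom mu `|` dom nu -> dle mu rho -> dle nu rho ->
  (forall S T, PNA mu S -> PNA nu T -> PNA rho (S `|` T)) -> oplus mu nu rho.
Proof.
move=> d e [_ mm] [_ mn] H; split=> //; split=> //.
by split=> [m|]; [rewrite mm | split=> [m|S T _ _ _ _]; [rewrite mn | exact: H]].
Qed.

Lemma dom_sub_disj (A1 A2 B1 B2 : set Var) : A1 `<=` B1 -> A2 `<=` B2 ->
  B1 `&` B2 = set0 -> A1 `&` A2 = set0.
Proof.
move=> AB1 AB2 /disjoints_subset B12.
by apply/disjoints_subset => x /AB1 /B12 nB2 /AB2.
Qed.

Lemma oplus_down_closed (x y z x' y' : distr) : oplus x y z -> dle x' x -> dle y' y ->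
  exists2 z', dle z' z & oplus x' y' z'.
Proof.
move=> xyz x'x y'y; have [dxy [dz _]] := xyz.
have fin : finite_set (dom x' `|` dom y').
  by rewrite finite_setU; split; exact: dom_fin.
have sub : dom x' `|` dom y' `<=` dom z by rewrite dz; exact: setUSS x'x.1 y'y.1.
pose z' := marg_distr fin z; have z'z : dle z' z := marg_distr_dle fin sub.
exists z' => //; apply: oplus_intro => //.
- exact: dom_sub_disj x'x.1 y'y.1 dxy.
- exact: dle_sub_dom (dle_trans x'x (oplus_dlel xyz)) z'z (@subsetUl _ _ _).
- exact: dle_sub_dom (dle_trans y'y (oplus_dler xyz)) z'z (@subsetUr _ _ _).
move=> S T hS hT; apply: (PNA_dle_down z'z).
  by rewrite bigU_setU; exact: setUSS hS.2.1 hT.2.1.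
exact: PNA_oplus xyz (PNA_dle x'x hS) (PNA_dle y'y hT).
Qed.

Lemma oplus_assoc (x y z t w : distr) : oplus t z w -> oplus x y t ->
  exists2 s, oplus y z s & oplus x s w.
Proof.
move=> tzw xyt; have [dtz [dw _]] := tzw; have [dxy [dt _]] := xyt.
have tw := oplus_dlel tzw; have zw := oplus_dler tzw.
have xw := dle_trans (oplus_dlel xyt) tw; have yw := dle_trans (oplus_dler xyt) tw.
have fin : finite_set (dom y `|` dom z).
  by rewrite finite_setU; split; exact: dom_fin.
have sub : dom y `|` dom z `<=` dom w.
  by rewrite subUset; split; [exact: yw.1 | exact: zw.1].
pose s := marg_distr fin w; have sw : dle s w := marg_distr_dle fin sub.
have ys : dle y s := dle_sub_dom yw sw (@subsetUl _ _ _).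
have zs : dle z s := dle_sub_dom zw sw (@subsetUr _ _ _).
have dyz : dom y `&` dom z = set0 := dom_sub_disj (oplus_dler xyt).1 (@subset_refl _ _) dtz.
have dxs : dom x `&` dom s = set0.
  by rewrite /= setIUr dxy (dom_sub_disj (oplus_dlel xyt).1 (@subset_refl _ _) dtz) setU0.
exists s.
  apply: oplus_intro => // Sy Sz hy hz; apply: (PNA_dle_down sw).
    by rewrite bigU_setU; exact: setUSS hy.2.1 hz.2.1.
  by apply: PNA_oplus tzw _ hz; rewrite -[Sy]set0U; exact: PNA_oplus xyt (PNA_set0 x) hy.
apply: oplus_intro => //; first by rewrite dw dt -setUA.
move=> S T hS hT; have [Tp [Ts _]] := hT.
have hTy : PNA y (restr_part T (dom y)).
  apply: (PNA_dle_down ys); first by rewrite bigU_restr_part; exact: subIsetr.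
  exact: PNA_restr_part.
have hTz : PNA z (restr_part T (dom z)).
  apply: (PNA_dle_down zs); first by rewrite bigU_restr_part; exact: subIsetr.
  exact: PNA_restr_part.
apply: PNA_coarsens (PNA_oplus tzw (PNA_oplus xyt hS hTy) hTz).
rewrite -setUA; apply: coarsensU; first exact: coarsens_refl hS.1.
  exact: coarsens_restr_part_split.
exact: dom_sub_disj hS.2.1 Ts dxs.
Qed.

Lemma oplus_unit mu : oplus dirac0 mu mu.
Proof.
apply: oplus_intro; [exact: set0I | by rewrite set0U | exact: dirac0_dle |
  exact: dle_refl |].
move=> S T [Sp [S0 _]] hT; rewrite (partition_bigU0 Sp) ?set0U //.
by apply/seteqP; split=> // x /S0.
Qed.

End PNA_frame.

Theorem mainTheorem7 (R : realType) (Var : Type) :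
  DownClosedBIFrame (@dle R Var) (@oplus R Var) [set: @distr R Var].
Proof.
split; first by split; [exact: dle_refl | exact: dle_trans].
split; first exact: oplus_down_closed.
split; first exact: oplusC.
split; first exact: oplus_assoc.
split; first by move=> x; exists dirac0 => //; exact: oplus_unit.
by split=> // e x y _; exact: oplus_dlel.
Qed.
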